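(* Consider the algorithm described in the context, suppose it does not terminate finitely, and suppose there is $\sigma_{\min}>0$ with $\sigma_{\min}(J_k)\ge\sigma_{\min}$ for all $k\in\mathbb{N}$. Then the Lagrange multiplier estimate sequence $\{y_k\}$ is bounded.
   Context: Problem: $\min_{x\in\mathbb{R}^n} f(x)+r(x)$ subject to $c(x)=0$, where $f:\mathbb{R}^n\to\mathbb{R}$ and $c:\mathbb{R}^n\to\mathbb{R}^m$ ($m\le n$) are continuously differentiable and $r:\mathbb{R}^n\to\mathbb{R}_{\ge 0}$ is convex. Write $g(x)=\nabla f(x)$, $J(x)=\nabla c(x)^T$, and $f_k=f(x_k)$, $g_k=g(x_k)$, $c_k=c(x_k)$, $J_k=J(x_k)$, $r_k=r(x_k)$. All norms are Euclidean. Merit function: $\Phi_\tau(x)=\tau(f(x)+r(x))+\|c(x)\|_2$. Algorithm: inputs $x_0$, $\alpha_0>0$, $\tau_{-1}>0$; constants $\kappa_v>0$, $\sigma_c,\epsilon_\tau,\xi,\eta\in(0,1)$, $\sigma_u\in(0,1/2]$, $\bar\sigma_u:=\sigma_u+\tfrac12$. For $k=0,1,\dots$: 1. If $J_k^Tc_k\ne0$, compute $v_k$ with $v_k\in\mathrm{Range}(J_k^T)$, $\|v_k\|_2\le\kappa_v\alpha_k\|J_k^Tc_k\|_2$, $\|c_k+J_kv_k\|_2\le\|c_k+J_kv_k^c\|_2$, where $v_k^c=-\beta_k^cJ_k^Tc_k$ with $\beta_k^c$ minimizing $\tfrac12\|c_k-\beta J_kJ_k^Tc_k\|_2^2$ over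 $0\le\beta\le\kappa_v\alpha_k$. Otherwise set $v_k=0$, and if $c_k\ne0$ terminate. 2. Let $u_k$ be the unique minimizer of $g_k^Tu+\tfrac1{2\alpha_k}\|u\|_2^2+r(x_k+v_k+u)$ subject to $J_ku=0$; set $s_k=v_k+u_k$. If $s_k=0$, terminate. By the optimality conditions there exist $g_{r,k}\in\partial r(x_k+s_k)$ and $y_k\in\mathbb{R}^m$ with $g_k+\tfrac1{\alpha_k}u_k+g_{r,k}-J_k^Ty_k=0$; $g_{r,k},y_k$ denote such vectors ($y_k$ is the Lagrange multiplier estimate). 3. Let $D_k:=g_k^Ts_k+\bar\sigma_u\|s_k\|_2^2/\alpha_k+r(x_k+s_k)-r_k$; $\tau_{k,\mathrm{trial}}=\infty$ if $D_k\le0$, else $\tau_{k,\mathrm{trial}}=(1-\sigma_c)(\|c_k\|_2-\|c_k+J_kv_k\|_2)/D_k$. Set $\tau_k=\tau_{k-1}$ if $\tau_{k-1}\le\tau_{k,\mathrm{trial}}$, else $\tau_k=\min\{(1-\epsilon_\tau)\tau_{k-1},\tau_{k,\mathrm{trial}}\}$. 4. With $\Delta q_k(s,\tau):=-\tau(g_k^Ts+\tfrac1{2\alpha_k}\|s\|_2^2+r(x_k+s)-r_k)+\|c_k\|_2-\|c_k+J_ks\|_2$: if $\Phi_{\tau_k}(x_k+s_k)\le\Phi_{\tau_k}(x_k)-\eta\Delta q_k(s_k,\tau_k)$ set $x_{k+1}=x_k+s_k$, $\alpha_{k+1}=\alpha_k$; else $x_{k+1}=x_k$, $\alpha_{k+1}=\xi\alpha_k$.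 Standing assumption: there is an open convex set $\mathcal X$ containing all iterates $x_k$ and trial points $x_k+s_k$ such that $f$ is bounded below on $\mathcal X$, $\nabla f$ is bounded and Lipschitz continuous on $\mathcal X$, $c$ is bounded on $\mathcal X$, $J$ is bounded and Lipschitz continuous on $\mathcal X$, and all subgradients of $r$ at points of $\mathcal X$ are uniformly bounded in norm. *)

From HB Require Import structures.
From mathcomp Require Import all_boot all_order all_algebra.
From mathcomp Require Import all_classical all_reals.
Set Implicit Arguments. Unset Strict Implicit. Unset Printing Implicit Defensive.
Import Order.TTheory GRing.Theory Num.Theory.
Local Open Scope ring_scope.

Section Defs.
Variable R : realType.

Definition enorm (p q : nat) (A : 'M[R]_(p, q)) : R :=
  Num.sqrt (\sum_(i < p) \sum_(j < q) A i j ^+ 2).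

Definition dotv (n : nat) (u w : 'cV[R]_n) : R := (u^T *m w) 0 0.

Definition subgrad (n : nat) (r : 'cV[R]_n -> R) (x gr : 'cV[R]_n) : Prop :=
  forall z, r x + dotv gr (z - x) <= r z.

Definition convex_fun (n : nat) (r : 'cV[R]_n -> R) : Prop :=
  forall x z (t : R), 0 <= t -> t <= 1 ->
    r (t *: x + (1 - t) *: z) <= t * r x + (1 - t) * r z.

Definition convex_set (n : nat) (X : 'cV[R]_n -> Prop) : Prop :=
  forall x z (t : R), X x -> X z -> 0 <= t -> t <= 1 -> X (t *: x + (1 - t) *: z).

Definition open_set (n : nat) (X : 'cV[R]_n -> Prop) : Prop :=
  forall x, X x -> exists e : R, 0 < e /\ forall z, enorm (z - x) < e -> X z.

Definition has_gradient (n : nat) (f : 'cV[R]_n -> R) (g : 'cV[R]_n -> 'cV[R]_n) : Prop :=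
  forall x (e : R), 0 < e -> exists d : R, 0 < d /\
    forall h, enorm h < d -> `|f (x + h) - f x - dotv (g x) h| <= e * enorm h.

Definition has_jacobian (n m : nat) (c : 'cV[R]_n -> 'cV[R]_m)
    (J : 'cV[R]_n -> 'M[R]_(m, n)) : Prop :=
  forall x (e : R), 0 < e -> exists d : R, 0 < d /\
    forall h, enorm h < d -> enorm (c (x + h) - c x - J x *m h) <= e * enorm h.

Definition cont_fun (n p q : nat) (F : 'cV[R]_n -> 'M[R]_(p, q)) : Prop :=
  forall x (e : R), 0 < e -> exists d : R, 0 < d /\
    forall z, enorm (z - x) < d -> enorm (F z - F x) < e.

(* smallest singular value of an m x n matrix A with m <= n:
   sigma_min(A) = min_{|w| = 1} |A^T w|. *)
Definition sigma_min (m n : nat) (A : 'M[R]_(m, n)) : R :=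
  inf [set t : R | exists w : 'cV[R]_m, enorm w = 1 /\ t = enorm (A^T *m w)].

Definition Phi (n m : nat) (f r : 'cV[R]_n -> R) (c : 'cV[R]_n -> 'cV[R]_m)
    (tau : R) (z : 'cV[R]_n) : R :=
  tau * (f z + r z) + enorm (c z).

(* One iteration k of the algorithm (steps 1-4).
   tau_m1 is tau_{-1}; constants kv, sc = sigma_c, et = epsilon_tau, xi, eta,
   su = sigma_u.  gr k = g_{r,k}, y k = y_k. *)
Definition alg_step (n m : nat) (f r : 'cV[R]_n -> R) (c : 'cV[R]_n -> 'cV[R]_m)
    (g : 'cV[R]_n -> 'cV[R]_n) (J : 'cV[R]_n -> 'M[R]_(m, n))
    (kv sc et xi eta su tau_m1 : R)
    (x v u s gr : nat -> 'cV[R]_n) (alpha tau : nat -> R) (y : nat -> 'cV[R]_m)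
    (k : nat) : Prop :=
  let xk := x k in
  let ck := c xk in
  let gk := g xk in
  let Jk := J xk in
  let ak := alpha k in
  let Jc := Jk^T *m ck in
  let sbar := su + 2^-1 in
  let taup := if k is k'.+1 then tau k' else tau_m1 in
  [/\
    (Jc != 0 ->
      [/\ exists w : 'cV[R]_m, v k = Jk^T *m w,
          enorm (v k) <= kv * ak * enorm Jc &
          exists bc : R,
            [/\ 0 <= bc, bc <= kv * ak,
                (forall b : R, 0 <= b -> b <= kv * ak ->
                   2^-1 * enorm (ck - bc *: (Jk *m Jc)) ^+ 2
                   <= 2^-1 * enorm (ck - b *: (Jk *m Jc)) ^+ 2) &
                enorm (ck + Jk *m v k) <= enorm (ck + Jk *m (- (bc *: Jc)))]]),
    (Jc = 0 -> v k = 0),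
    [/\ Jk *m u k = 0,
        (forall w, Jk *m w = 0 ->
           dotv gk (u k) + (2 * ak)^-1 * enorm (u k) ^+ 2 + r (xk + v k + u k)
           <= dotv gk w + (2 * ak)^-1 * enorm w ^+ 2 + r (xk + v k + w)),
        s k = v k + u k,
        subgrad r (xk + s k) (gr k) &
        gk + ak^-1 *: u k + gr k - Jk^T *m y k = 0],
    (let D := dotv gk (s k) + sbar * enorm (s k) ^+ 2 / ak + r (xk + s k) - r xk in
     tau k = if D <= 0 then taup
             else let ttrial := (1 - sc) * (enorm ck - enorm (ck + Jk *m v k)) / D in
                  if taup <= ttrial then taup
                  else Num.min ((1 - et) * taup) ttrial) &
    (let dq := - tau k * (dotv gk (s k) + (2 * ak)^-1 * enorm (s k) ^+ 2
                          + r (xk + s k) - r xk)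
               + enorm ck - enorm (ck + Jk *m s k) in
     if Phi f r c (tau k) (xk + s k) <= Phi f r c (tau k) xk - eta * dq
     then x k.+1 = xk + s k /\ alpha k.+1 = ak
     else x k.+1 = xk /\ alpha k.+1 = xi * ak)].

Definition alg_run (n m : nat) (f r : 'cV[R]_n -> R) (c : 'cV[R]_n -> 'cV[R]_m)
    (g : 'cV[R]_n -> 'cV[R]_n) (J : 'cV[R]_n -> 'M[R]_(m, n))
    (kv sc et xi eta su tau_m1 : R)
    (x v u s gr : nat -> 'cV[R]_n) (alpha tau : nat -> R) (y : nat -> 'cV[R]_m)
    : Prop :=
  [/\ [/\ 0 < kv, 0 < sc < 1, 0 < et < 1, 0 < xi < 1 & 0 < eta < 1],
      0 < su <= 2^-1,
      0 < alpha 0, 0 < tau_m1 &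
      forall k, alg_step f r c g J kv sc et xi eta su tau_m1 x v u s gr alpha tau y k].

(* The algorithm never terminates: in step 1 never (J_k^T c_k = 0 and c_k <> 0),
   and in step 2 never s_k = 0. *)
Definition no_termination (n m : nat) (c : 'cV[R]_n -> 'cV[R]_m)
    (J : 'cV[R]_n -> 'M[R]_(m, n)) (x s : nat -> 'cV[R]_n) : Prop :=
  forall k, ((J (x k))^T *m c (x k) = 0 -> c (x k) = 0) /\ s k != 0.

Definition standing_assumption (n m : nat) (f r : 'cV[R]_n -> R)
    (c : 'cV[R]_n -> 'cV[R]_m) (g : 'cV[R]_n -> 'cV[R]_n)
    (J : 'cV[R]_n -> 'M[R]_(m, n)) (X : 'cV[R]_n -> Prop)
    (x s : nat -> 'cV[R]_n) : Prop :=
  [/\ [/\ open_set X, convex_set X &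
      (forall k, X (x k) /\ X (x k + s k))],
      (exists L : R, forall z, X z -> L <= f z),
      [/\ (exists M : R, forall z, X z -> enorm (g z) <= M) &
      (exists L : R, forall z w, X z -> X w -> enorm (g z - g w) <= L * enorm (z - w))],
      (exists M : R, forall z, X z -> enorm (c z) <= M) &
     [/\
      (* ||J(z)||_2 <= M, written out as an operator-norm bound *)
      (exists M : R, forall z (h : 'cV[R]_n), X z -> enorm (J z *m h) <= M * enorm h),
      (* ||J(z) - J(w)||_2 <= L ||z - w|| *)
      (exists L : R, forall z w (h : 'cV[R]_n), X z -> X w ->
          enorm ((J z - J w) *m h) <= L * enorm (z - w) * enorm h) &
      (exists M : R, forall z gr, X z -> subgrad r z gr -> enorm gr <= M)]].

End Defs.

From HB Require Import structures.
From mathcomp Require Import all_boot all_order all_algebra.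
From mathcomp Require Import all_classical all_reals.
From mathcomp Require Import lra.
Import Order.TTheory GRing.Theory Num.Theory.
Set Implicit Arguments. Unset Strict Implicit. Unset Printing Implicit Defensive.
Local Open Scope ring_scope.

(* Stationarity reads J_k^T y_k = h_k + u_k / alpha_k with h_k = g_k + g_{r,k},
   and u_k lies in the null space of J_k, so u_k is orthogonal to J_k^T y_k.
   Pairing the stationarity equation with u_k and using Cauchy-Schwarz gives
   |u_k| / alpha_k <= |h_k|, hence |J_k^T y_k| <= 2 |h_k|, which is bounded by
   the standing assumption.  Finally sigma_min(J_k) |y_k| <= |J_k^T y_k|. *)

Section EuclideanNorm.
Variable R : realType.

Lemma enorm_ge0 p q (A : 'M[R]_(p, q)) : 0 <= enorm A.
Proof. exact: sqrtr_ge0. Qed.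

Lemma enormZ p q (a : R) (A : 'M[R]_(p, q)) : enorm (a *: A) = `|a| * enorm A.
Proof.
rewrite /enorm -sqrtr_sqr -sqrtrM ?sqr_ge0 // mulr_sumr; congr Num.sqrt.
by apply: eq_bigr => i _; rewrite mulr_sumr; apply: eq_bigr => j _; rewrite mxE exprMn.
Qed.

Lemma enorm_sqr p q (A : 'M[R]_(p, q)) : enorm A ^+ 2 = \sum_i \sum_j A i j ^+ 2.
Proof.
by rewrite sqr_sqrtr //; apply: sumr_ge0 => i _; apply: sumr_ge0 => j _; exact: sqr_ge0.
Qed.

Lemma enorm0_eq0 p q (A : 'M[R]_(p, q)) : enorm A = 0 -> A = 0.
Proof.
have sq_ge0 i j : 0 <= A i j ^+ 2 by exact: sqr_ge0.
move=> A0; have := enorm_sqr A; rewrite A0 expr0n /= => /esym sum_eq0.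
have row_eq0 := psumr_eq0P (fun i _ => sumr_ge0 _ (fun j _ => sq_ge0 i j)) sum_eq0.
apply/matrixP => i j; rewrite mxE; apply/eqP; rewrite -sqrf_eq0; apply/eqP.
exact: (psumr_eq0P (fun j _ => sq_ge0 i j) (row_eq0 i isT)).
Qed.

Variable n : nat.
Implicit Types (u w z : 'cV[R]_n) (a : R).

Lemma dotvC u w : dotv u w = dotv w u.
Proof. by rewrite /dotv -{2}[u]trmxK -trmx_mul [RHS]mxE. Qed.

Lemma dotvDl u w z : dotv (u + w) z = dotv u z + dotv w z.
Proof. by rewrite /dotv linearD /= mulmxDl mxE. Qed.

Lemma dotvZl a u z : dotv (a *: u) z = a * dotv u z.
Proof. by rewrite /dotv linearZ /= -scalemxAl mxE. Qed.

Lemma dotvDr u w z : dotv z (u + w) = dotv z u + dotv z w.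
Proof. by rewrite dotvC dotvDl !(dotvC z). Qed.

Lemma dotvZr a u z : dotv z (a *: u) = a * dotv z u.
Proof. by rewrite dotvC dotvZl dotvC. Qed.

Lemma dotv0l z : dotv 0 z = 0.
Proof. by rewrite -(scale0r 0) dotvZl mul0r. Qed.

Lemma dotvv u : dotv u u = enorm u ^+ 2.
Proof.
rewrite enorm_sqr /dotv mxE; apply: eq_bigr => i _.
by rewrite big_ord1 mxE expr2.
Qed.

Lemma dotv_le_enorm u w : dotv u w <= enorm u * enorm w.
Proof.
have [uw0|nz] := eqVneq (enorm u * enorm w) 0.
  rewrite uw0; move/eqP: uw0; rewrite mulf_eq0 => /orP[] /eqP/enorm0_eq0 ->;
    by rewrite ?dotv0l // dotvC dotv0l.
(* expand 0 <= | |w| u - |u| w |^2 = 2 |u| |w| (|u| |w| - <u, w>) *)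
have := dotvv (enorm w *: u + (- enorm u) *: w).
rewrite !(dotvDl, dotvDr, dotvZl, dotvZr) (dotvC w u) !dotvv => sq.
have : 0 <= enorm u * enorm w * (enorm u * enorm w - dotv u w) by nra.
rewrite pmulr_rge0 ?subr_ge0 // lt_def nz.
by rewrite mulr_ge0 ?enorm_ge0.
Qed.

Lemma CauchySchwarz_dotv u w : `|dotv u w| <= enorm u * enorm w.
Proof.
have := dotv_le_enorm ((-1) *: u) w.
rewrite dotvZl enormZ normrN1 mul1r mulN1r => neg_le.
by rewrite ler_norml lerNl neg_le dotv_le_enorm.
Qed.

Lemma ler_enormD u w : enorm (u + w) <= enorm u + enorm w.
Proof.
rewrite -(ler_sqr (enorm_ge0 _)) ?nnegrE ?addr_ge0 ?enorm_ge0 //.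
rewrite -dotvv dotvDl !dotvDr !dotvv (dotvC w u).
have := dotv_le_enorm u w; lra.
Qed.

(* -a u is the orthogonal projection of h onto the line through u. *)
Lemma enorm_proj_le h u a : dotv (h + a *: u) u = 0 -> enorm (a *: u) <= enorm h.
Proof.
rewrite dotvDl dotvZl dotvv => /eqP; rewrite addrC addr_eq0 => /eqP proj.
have key : `|a| * enorm u ^+ 2 <= enorm h * enorm u.
  by rewrite -[enorm u ^+ 2]ger0_norm ?sqr_ge0 // -normrM proj normrN CauchySchwarz_dotv.
rewrite enormZ; have [u0|u_neq0] := eqVneq (enorm u) 0.
  by rewrite u0 mulr0 enorm_ge0.
have u_gt0 : 0 < enorm u by rewrite lt_def u_neq0 enorm_ge0.
by rewrite -(ler_pM2r u_gt0) -mulrA -expr2.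
Qed.

End EuclideanNorm.

Section MultiplierBound.
Variables (R : realType) (m n : nat).
Implicit Types (A : 'M[R]_(m, n)) (y : 'cV[R]_m) (h u : 'cV[R]_n).

Lemma dotv_trmx_mull A y u : dotv (A^T *m y) u = dotv y (A *m u).
Proof. by rewrite /dotv trmx_mul trmxK mulmxA. Qed.

Lemma sigma_min_enorm_le A y : sigma_min A * enorm y <= enorm (A^T *m y).
Proof.
have [y0|y_neq0] := eqVneq (enorm y) 0; first by rewrite y0 mulr0 enorm_ge0.
have y_gt0 : 0 < enorm y by rewrite lt_def y_neq0 enorm_ge0.
have inv_ge0 : 0 <= (enorm y)^-1 by rewrite invr_ge0 enorm_ge0.
have : sigma_min A <= enorm (A^T *m ((enorm y)^-1 *: y)).
  apply: ge_inf; first by exists 0 => t [w [_ ->]]; exact: enorm_ge0.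
  by exists ((enorm y)^-1 *: y); rewrite enormZ ger0_norm // mulVf.
by rewrite -scalemxAr enormZ ger0_norm // ler_pdivlMl // mulrC.
Qed.

Lemma multiplier_enorm_le A y h u a :
  A *m u = 0 -> A^T *m y = h + a *: u -> sigma_min A * enorm y <= 2 * enorm h.
Proof.
move=> Au0 stat.
have orth : dotv (h + a *: u) u = 0.
  by rewrite -stat dotv_trmx_mull Au0 dotvC dotv0l.
apply: le_trans (sigma_min_enorm_le A y) _.
rewrite stat mulr_natl mulr2n; apply: le_trans (ler_enormD _ _) _.
by rewrite lerD2l enorm_proj_le.
Qed.

End MultiplierBound.

Theorem lemma3p17 (R : realType) (n m : nat)
    (f r : 'cV[R]_n -> R) (c : 'cV[R]_n -> 'cV[R]_m)
    (g : 'cV[R]_n -> 'cV[R]_n) (J : 'cV[R]_n -> 'M[R]_(m, n))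
    (kv sc et xi eta su tau_m1 : R)
    (x v u s gr : nat -> 'cV[R]_n) (alpha tau : nat -> R) (y : nat -> 'cV[R]_m)
    (X : 'cV[R]_n -> Prop) (smin : R) :
  (m <= n)%N ->
  has_gradient f g -> cont_fun g ->
  has_jacobian c J -> cont_fun J ->
  convex_fun r -> (forall z, 0 <= r z) ->
  standing_assumption f r c g J X x s ->
  alg_run f r c g J kv sc et xi eta su tau_m1 x v u s gr alpha tau y ->
  no_termination c J x s ->
  0 < smin -> (forall k, smin <= sigma_min (J (x k))) ->
  exists M : R, forall k, enorm (y k) <= M.
Proof.
move=> _ _ _ _ _ _ _ SA RUN _ smin_gt0 smin_le.
case: SA => [[_ _ XP] _ [[Mg g_le] _] _ [_ _ [Mr gr_le]]].
case: RUN => _ _ _ _ step.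
exists (2 * (Mg + Mr) / smin) => k.
have [_ _ [Ju _ _ gr_sub stat] _ _] := step k.
have Jy : (J (x k))^T *m y k = (g (x k) + gr k) + (alpha k)^-1 *: u k.
  by rewrite -[LHS]add0r -stat subrK addrAC.
rewrite ler_pdivlMr // mulrC.
apply: le_trans (ler_wpM2r (enorm_ge0 _) (smin_le k)) _.
apply: le_trans (multiplier_enorm_le Ju Jy) _.
rewrite ler_pM2l ?ltr0n //; apply: le_trans (ler_enormD _ _) _.
by apply: lerD; [exact: g_le (XP k).1 | exact: gr_le (XP k).2 gr_sub].
Qed.
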